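(* Let $X$, $Y$ be disjoint sets of cardinality at least two, $M\le\mathrm{Sym}(X)$ and $N\le\mathrm{Sym}(Y)$ nontrivial permutation groups, $T$ the $(|X|,|Y|)$-biregular tree, and $c$ a legal colouring. For $v\in V_X$ and $w\in V_Y$, the set $\hat{M}(v) := \{g_{\mu,v} : \mu\in M\}$ is a subgroup of the stabiliser $U_c(M,N)_v$ and $\hat{N}(w):=\{g_{\tau,w} : \tau\in N\}$ is a subgroup of $U_c(M,N)_w$. Moreover $\hat{M}(v)$ is isomorphic to $M$ and $\hat{N}(w)$ is isomorphic to $N$.
   Context: $T$ has natural bipartition $VT=V_X\sqcup V_Y$ (vertices in $V_X$ have valency $|X|$, in $V_Y$ valency $|Y|$). $A(v)$, $\overline{A}(v)$ are the sets of arcs with origin, resp. terminus, $v$. A legal colouring is a map $c:AT\to X\cup Y$ restricting to a bijection $A(v)\to X$ for $v\in V_X$, to a bijection $A(v)\to Y$ for $v\in V_Y$, and constant on each $\overline{A}(v)$. $U_c(M,N)$ is the group of $g\in\mathrm{Aut}(T)$ with $gV_X=V_X$ and $c|_{A(gv)}\circ g|_{A(v)}\circ(c|_{A(v)})^{-1}$ in $M$ for $v\in V_X$ and in $N$ for $v\in V_Y$. For $\mu\in M$, let $\hat\mu\in\mathrm{Sym}(X\cup Y)$ equal $\mu$ on $X$ and the identity on $Y$; for $v\in V_X$, $g_{\mu,v}$ denotes the unique $g\in\mathrm{Aut}(T)$ with $gV_X=V_X$, $gv=v$ and $c=\hat\mu\circ c\circ g$ (such $g$ exists and is unique, and lies in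 $U_c(M,N)$). For $\tau\in N$ and $w\in V_Y$, $\hat\tau$ (equal to $\tau$ on $Y$ and the identity on $X$) and $g_{\tau,w}$ are defined analogously. *)

From Stdlib Require Import List Relations.
Import ListNotations.
Set Implicit Arguments.

Section Defs.
Variables (X Y V : Type).

Definition bijective_fun (T : Type) (f : T -> T) : Prop :=
  (forall a b, f a = f b -> a = b) /\ (forall b, exists a, f a = b).

Definition perm_group (T : Type) (G : (T -> T) -> Prop) : Prop :=
  (forall f, G f -> bijective_fun f) /\
  G (fun x => x) /\
  (forall f g, G f -> G g -> G (fun x => f (g x))) /\
  (forall f, G f -> exists h, G h /\ forall x, h (f x) = x /\ f (h x) = x).

Definition nontrivial_group (T : Type) (G : (T -> T) -> Prop) : Prop :=
  exists f, G f /\ f <> (fun x => x).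

Definition card_ge2 (T : Type) : Prop := exists a b : T, a <> b.

Fixpoint is_walk (adj : V -> V -> Prop) (l : list V) : Prop :=
  match l with
  | x :: ((y :: _) as t) => adj x y /\ is_walk adj t
  | _ => True
  end.

Fixpoint no_backtrack (l : list V) : Prop :=
  match l with
  | x :: ((y :: z :: _) as t) => x <> z /\ no_backtrack t
  | _ => True
  end.

Definition is_tree (adj : V -> V -> Prop) : Prop :=
  (forall u w, adj u w -> adj w u) /\
  (forall u, ~ adj u u) /\
  (forall u w, clos_refl_trans V adj u w) /\
  (* no reduced closed walk of positive length *)
  (forall v l, is_walk adj (v :: l ++ [v]) -> ~ no_backtrack (v :: l ++ [v])).

Definition valency_card (adj : V -> V -> Prop) (v : V) (T : Type) : Prop :=
  exists f : T -> V, (forall x, adj v (f x)) /\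
                     (forall w, adj v w -> exists! x, f x = w).

Definition biregular_tree (adj : V -> V -> Prop) (VX VY : V -> Prop) : Prop :=
  is_tree adj /\
  (forall v, VX v \/ VY v) /\ (forall v, ~ (VX v /\ VY v)) /\
  (forall u w, adj u w -> (VX u <-> VY w)) /\
  (forall v, VX v -> valency_card adj v X) /\
  (forall v, VY v -> valency_card adj v Y).

(** Colours are X ⊔ Y, modelled as the sum type X + Y; c v w is the colour
    of the arc from v to w. *)
Definition legal_colouring (adj : V -> V -> Prop) (VX VY : V -> Prop)
  (c : V -> V -> X + Y) : Prop :=
  (forall v, VX v ->
     (forall w, adj v w -> exists x, c v w = inl x) /\
     (forall x, exists! w, adj v w /\ c v w = inl x)) /\
  (forall v, VY v ->
     (forall w, adj v w -> exists y, c v w = inr y) /\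
     (forall y, exists! w, adj v w /\ c v w = inr y)) /\
  (forall u u' v, adj u v -> adj u' v -> c u v = c u' v).

Definition is_aut (adj : V -> V -> Prop) (g : V -> V) : Prop :=
  bijective_fun g /\ (forall u w, adj u w <-> adj (g u) (g w)).

Definition hatX (mu : X -> X) (z : X + Y) : X + Y :=
  match z with inl x => inl (mu x) | inr y => inr y end.
Definition hatY (tau : Y -> Y) (z : X + Y) : X + Y :=
  match z with inl x => inl x | inr y => inr (tau y) end.

(** U_c(M,N): the local permutation c|A(gv) ∘ g|A(v) ∘ (c|A(v))^{-1}
    is some element of M (resp. N). *)
Definition in_Uc (adj : V -> V -> Prop) (VX VY : V -> Prop)
  (c : V -> V -> X + Y) (M : (X -> X) -> Prop) (N : (Y -> Y) -> Prop)
  (g : V -> V) : Prop :=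
  is_aut adj g /\ (forall u, VX u <-> VX (g u)) /\
  (forall v, VX v -> exists mu, M mu /\
      forall w, adj v w -> c (g v) (g w) = hatX mu (c v w)) /\
  (forall v, VY v -> exists tau, N tau /\
      forall w, adj v w -> c (g v) (g w) = hatY tau (c v w)).

Definition Uc_stab adj VX VY c M N (v : V) (g : V -> V) : Prop :=
  in_Uc adj VX VY c M N g /\ g v = v.

Definition is_g_mu (adj : V -> V -> Prop) (VX : V -> Prop)
  (c : V -> V -> X + Y) (mu : X -> X) (v : V) (g : V -> V) : Prop :=
  is_aut adj g /\ (forall u, VX u <-> VX (g u)) /\ g v = v /\
  (forall u w, adj u w -> c u w = hatX mu (c (g u) (g w))).

Definition is_g_tau (adj : V -> V -> Prop) (VX : V -> Prop)
  (c : V -> V -> X + Y) (tau : Y -> Y) (w : V) (g : V -> V) : Prop :=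
  is_aut adj g /\ (forall u, VX u <-> VX (g u)) /\ g w = w /\
  (forall u u', adj u u' -> c u u' = hatY tau (c (g u) (g u'))).

Definition Mhat adj VX c (M : (X -> X) -> Prop) (v : V) (g : V -> V) : Prop :=
  exists mu, M mu /\ is_g_mu adj VX c mu v g.
Definition Nhat adj VX c (N : (Y -> Y) -> Prop) (w : V) (g : V -> V) : Prop :=
  exists tau, N tau /\ is_g_tau adj VX c tau w g.

End Defs.

Definition is_subgroup (T : Type) (H K : (T -> T) -> Prop) : Prop :=
  (forall g, H g -> K g) /\
  H (fun x => x) /\
  (forall f g, H f -> H g -> H (fun x => f (g x))) /\
  (forall f, H f -> exists h, H h /\ forall x, h (f x) = x /\ f (h x) = x).

Definition groups_isomorphic (A B : Type) (G : (A -> A) -> Prop)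
  (H : (B -> B) -> Prop) : Prop :=
  exists phi : (A -> A) -> (B -> B),
    (forall f, G f -> H (phi f)) /\
    (forall f f', G f -> G f' -> phi f = phi f' -> f = f') /\
    (forall h, H h -> exists f, G f /\ phi f = h) /\
    (forall f f', G f -> G f' -> phi (fun x => f (f' x)) = (fun y => phi f (phi f' y))).

(* Colours are constant on the arcs entering a vertex, so every vertex u has an
   incoming colour, and u is determined by the word of incoming colours read
   along the geodesic from v.  Relabelling these words letterwise by a colour
   permutation that preserves the two colour classes and fixes the incoming
   colour of v is an automorphism fixing v which recolours every arc
   accordingly; for the permutation hat(mu^-1) this is g_{mu,v}.  It is unique
   by connectedness, mu is read off from its action on the arcs at v, and since
   mu |-> g_{mu,v} reverses products, mu |-> g_{mu^-1,v} is an isomorphism onto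
   hat M(v).  The local actions of g_{mu,v} are mu^-1 at the vertices of V_X
   and trivial at those of V_Y, so hat M(v) lies in U_c(M,N)_v. *)

From Stdlib Require Import List Relations Classical ClassicalEpsilon FunctionalExtensionality.
Import ListNotations.

Section Backtracking.
Variable V : Type.

Lemma no_backtrack_app_cons2 (l m : list V) (x y : V) :
  no_backtrack (l ++ x :: y :: m) <->
  no_backtrack (l ++ [x; y]) /\ no_backtrack (x :: y :: m).
Proof.
  induction l as [|a l IH]; simpl.
  - destruct m; simpl; tauto.
  - destruct l as [|b l]; simpl in *.
    + destruct m; simpl; tauto.
    + destruct l as [|d l]; simpl in *.
      * destruct m; simpl in *; tauto.
      * rewrite IH. tauto.
Qed.

Lemma no_backtrack_rev (l : list V) : no_backtrack l -> no_backtrack (rev l).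
Proof.
  destruct l as [|a t]; [trivial|]. revert a.
  induction t as [|b t IH]; intros a H; [exact I|].
  destruct t as [|d t]; [exact I|].
  destruct H as [Had Hr]. specialize (IH b Hr).
  simpl in IH |- *. rewrite <- !app_assoc. simpl.
  apply no_backtrack_app_cons2. split.
  - rewrite <- app_assoc in IH. exact IH.
  - simpl. auto.
Qed.

End Backtracking.

Section Graphs.
Variables (V : Type) (adj : V -> V -> Prop).

Lemma is_walk_app_cons (l m : list V) (x : V) :
  is_walk adj (l ++ x :: m) <-> is_walk adj (l ++ [x]) /\ is_walk adj (x :: m).
Proof.
  induction l as [|a l IH]; simpl.
  - tauto.
  - destruct l as [|b l]; simpl in *.
    + destruct m; simpl; tauto.
    + rewrite IH. tauto.
Qed.

Lemma is_walk_rev (l : list V) :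
  (forall u w, adj u w -> adj w u) -> is_walk adj l -> is_walk adj (rev l).
Proof.
  intros Hsym. induction l as [|a l IH]; intros H; simpl; [exact I|].
  destruct l as [|b l]; simpl; [exact I|].
  destruct H as [Hab Hl]. specialize (IH Hl). simpl in IH.
  rewrite <- app_assoc. apply is_walk_app_cons. simpl. auto.
Qed.

Lemma is_aut_comp (g1 g2 : V -> V) :
  is_aut adj g1 -> is_aut adj g2 -> is_aut adj (fun u => g1 (g2 u)).
Proof.
  intros [[I1 S1] A1] [[I2 S2] A2]. split; [split|].
  - intros a b E. apply I2, I1, E.
  - intros b. destruct (S1 b) as [a1 E1]. destruct (S2 a1) as [a2 E2].
    exists a2. congruence.
  - intros u w. rewrite A2, A1. tauto.
Qed.

Lemma bijective_fun_inverse (g : V -> V) :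
  bijective_fun g -> exists h, forall u, h (g u) = u /\ g (h u) = u.
Proof.
  intros [I S].
  exists (fun b => proj1_sig (constructive_indefinite_description _ (S b))).
  intros u. split.
  - apply I. exact (proj2_sig (constructive_indefinite_description _ (S (g u)))).
  - exact (proj2_sig (constructive_indefinite_description _ (S u))).
Qed.

Lemma is_aut_inverse (g h : V -> V) :
  is_aut adj g -> (forall u, h (g u) = u /\ g (h u) = u) -> is_aut adj h.
Proof.
  intros [_ A] Hh. split; [split|].
  - intros a b E. rewrite <- (proj2 (Hh a)), <- (proj2 (Hh b)). now rewrite E.
  - intros b. exists (g b). apply Hh.
  - intros u w. rewrite (A (h u) (h w)), (proj2 (Hh u)), (proj2 (Hh w)). tauto.
Qed.

End Graphs.

Definition is_inl {A B : Type} (a : A + B) : bool := if a then true else false.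

Lemma hatX_id {X Y : Type} (a : X + Y) : hatX (fun x => x) a = a.
Proof. now destruct a. Qed.

Lemma hatX_comp {X Y : Type} (f f' : X -> X) (a : X + Y) :
  hatX (fun x => f (f' x)) a = hatX f (hatX f' a).
Proof. now destruct a. Qed.

Lemma is_inl_hatX {X Y : Type} (mu : X -> X) (a : X + Y) : is_inl (hatX mu a) = is_inl a.
Proof. now destruct a. Qed.

Lemma hatY_id {X Y : Type} (a : X + Y) : hatY (fun y => y) a = a.
Proof. now destruct a. Qed.

Lemma hatY_comp {X Y : Type} (f f' : Y -> Y) (a : X + Y) :
  hatY (fun y => f (f' y)) a = hatY f (hatY f' a).
Proof. now destruct a. Qed.

Lemma is_inl_hatY {X Y : Type} (tau : Y -> Y) (a : X + Y) : is_inl (hatY tau a) = is_inl a.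
Proof. now destruct a. Qed.

Lemma hd_map_fixed {A : Type} (f : A -> A) (d : A) (s : list A) :
  f d = d -> hd d (map f s) = f (hd d s).
Proof. intros Hd. destruct s; simpl; congruence. Qed.

Section BiregularTree.
Variables (X Y V : Type) (adj : V -> V -> Prop) (VX VY : V -> Prop)
  (c : V -> V -> X + Y).
Hypothesis Htree : biregular_tree X Y adj VX VY.
Hypothesis Hc : legal_colouring adj VX VY c.

Lemma adj_sym u w : adj u w -> adj w u.
Proof. destruct Htree as [[H _] _]. apply H. Qed.

Lemma tree_connected u w : clos_refl_trans V adj u w.
Proof. destruct Htree as [[_ [_ [H _]]] _]. apply H. Qed.

Lemma no_closed_reduced_walk u l :
  is_walk adj (u :: l ++ [u]) -> ~ no_backtrack (u :: l ++ [u]).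
Proof. destruct Htree as [[_ [_ [_ H]]] _]. apply H. Qed.

Lemma VX_or_VY u : VX u \/ VY u.
Proof. destruct Htree as [_ [H _]]. apply H. Qed.

Lemma not_VX_VY u : ~ (VX u /\ VY u).
Proof. destruct Htree as [_ [_ [H _]]]. apply H. Qed.

Lemma adj_VX_VY u w : adj u w -> (VX u <-> VY w).
Proof. destruct Htree as [_ [_ [_ [H _]]]]. apply H. Qed.

Lemma VX_colour_inl u w : VX u -> adj u w -> exists x, c u w = inl x.
Proof. destruct Hc as [HX _]. intros Hu. apply (HX u Hu). Qed.

Lemma VY_colour_inr u w : VY u -> adj u w -> exists y, c u w = inr y.
Proof. destruct Hc as [_ [HY _]]. intros Hu. apply (HY u Hu). Qed.

Lemma is_inl_colour u w : adj u w -> (is_inl (c u w) = true <-> VX u).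
Proof.
  intros H. destruct (VX_or_VY u) as [Hu|Hu].
  - destruct (VX_colour_inl u w Hu H) as [x Hx]. rewrite Hx. simpl. tauto.
  - destruct (VY_colour_inr u w Hu H) as [y Hy]. rewrite Hy. simpl.
    split; [discriminate|]. intros Hu'. exfalso. apply (not_VX_VY u). tauto.
Qed.

Lemma colour_inj u w w' : adj u w -> adj u w' -> c u w = c u w' -> w = w'.
Proof.
  intros H1 H2 E. destruct Hc as [HX [HY _]]. destruct (VX_or_VY u) as [Hu|Hu].
  - destruct (proj1 (HX u Hu) w H1) as [x Hx].
    destruct (proj2 (HX u Hu) x) as [z [_ Hz]].
    transitivity z; [symmetry|]; apply Hz; split; congruence.
  - destruct (proj1 (HY u Hu) w H1) as [y Hy].
    destruct (proj2 (HY u Hu) y) as [z [_ Hz]].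
    transitivity z; [symmetry|]; apply Hz; split; congruence.
Qed.

Lemma colour_surj u (a : X + Y) :
  (is_inl a = true <-> VX u) -> exists w, adj u w /\ c u w = a.
Proof.
  intros Ha. destruct Hc as [HX [HY _]]. destruct a as [x|y]; simpl in Ha.
  - destruct (proj2 (HX u (proj1 Ha eq_refl)) x) as [z [Hz _]]. eauto.
  - assert (Hu : VY u).
    { destruct (VX_or_VY u) as [Hu|]; [|assumption]. discriminate (proj2 Ha Hu). }
    destruct (proj2 (HY u Hu) y) as [z [Hz _]]. eauto.
Qed.

Variables (x0 : X) (y0 : Y).

Lemma exists_in_neighbour u : exists w, adj w u.
Proof.
  destruct (VX_or_VY u) as [Hu|Hu].
  - destruct (colour_surj u (inl x0)) as [w [Hw _]]; [simpl; tauto|].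
    exists w. now apply adj_sym.
  - destruct (colour_surj u (inr y0)) as [w [Hw _]].
    + simpl. split; [discriminate|]. intros. exfalso. apply (not_VX_VY u). tauto.
    + exists w. now apply adj_sym.
Qed.

Definition in_colour (u : V) : X + Y :=
  c (epsilon (inhabits u) (fun w => adj w u)) u.

Lemma colour_in_colour u w : adj u w -> c u w = in_colour w.
Proof.
  intros H. destruct Hc as [_ [_ Hconst]]. apply Hconst; [exact H|].
  apply epsilon_spec, exists_in_neighbour.
Qed.

Lemma in_colour_inj u w w' :
  adj u w -> adj u w' -> in_colour w = in_colour w' -> w = w'.
Proof.
  intros H1 H2 E. apply (colour_inj u); auto.
  rewrite (colour_in_colour u w), (colour_in_colour u w'); auto.
Qed.

Lemma is_inl_in_colour_adj u w : adj u w -> (is_inl (in_colour w) = true <-> VX u).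
Proof. intros H. rewrite <- (colour_in_colour u w H). now apply is_inl_colour. Qed.

Lemma is_inl_in_colour u : is_inl (in_colour u) = true <-> VY u.
Proof.
  destruct (exists_in_neighbour u) as [w Hw].
  rewrite (is_inl_in_colour_adj w u Hw). now apply adj_VX_VY.
Qed.

Lemma is_inl_avail u (a : X + Y) :
  is_inl a <> is_inl (in_colour u) -> (is_inl a = true <-> VX u).
Proof.
  intros Ha. pose proof (is_inl_in_colour u). pose proof (VX_or_VY u).
  pose proof (not_VX_VY u). destruct (is_inl a), (is_inl (in_colour u)); intuition congruence.
Qed.

Lemma is_inl_in_colour_adj_neq u w :
  adj u w -> is_inl (in_colour w) <> is_inl (in_colour u).
Proof.
  intros H. pose proof (is_inl_in_colour_adj u w H). pose proof (is_inl_in_colour u).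
  pose proof (VX_or_VY u). pose proof (not_VX_VY u).
  destruct (is_inl (in_colour w)), (is_inl (in_colour u)); intuition congruence.
Qed.

Definition next (u : V) (a : X + Y) : V :=
  epsilon (inhabits u) (fun w => adj u w /\ in_colour w = a).

Lemma next_spec u a :
  (is_inl a = true <-> VX u) -> adj u (next u a) /\ in_colour (next u a) = a.
Proof.
  intros Ha. unfold next. apply epsilon_spec. destruct (colour_surj u a Ha) as [w [Hw Ew]].
  exists w. split; [exact Hw|]. rewrite <- Ew. symmetry. now apply colour_in_colour.
Qed.

Lemma next_in_colour u w : adj u w -> next u (in_colour w) = w.
Proof.
  intros H. destruct (next_spec u (in_colour w)) as [H1 H2].
  - now apply is_inl_in_colour_adj.
  - now apply (in_colour_inj u).
Qed.


Section Root.
Variable v : V.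

(* A vertex is encoded by the incoming colours along the geodesic from [v];
   the head of the word is the last step. *)
Fixpoint follow (s : list (X + Y)) : V :=
  match s with [] => v | a :: s' => next (follow s') a end.

Fixpoint reduced (s : list (X + Y)) : Prop :=
  match s with
  | [] => True
  | a :: s' => reduced s' /\ is_inl a <> is_inl (hd (in_colour v) s') /\
      match s' with [] => True | _ :: s'' => a <> hd (in_colour v) s'' end
  end.

Lemma in_colour_follow s : reduced s -> in_colour (follow s) = hd (in_colour v) s.
Proof.
  induction s as [|a s IH]; intros H; [reflexivity|].
  destruct H as [Hs [Ha _]]. apply (next_spec (follow s) a), is_inl_avail.
  rewrite IH by exact Hs. exact Ha.
Qed.

Lemma follow_adj a s : reduced (a :: s) -> adj (follow s) (follow (a :: s)).
Proof.
  intros [Hs [Ha _]]. apply (next_spec (follow s) a), is_inl_avail.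
  rewrite in_colour_follow by exact Hs. exact Ha.
Qed.

Fixpoint trace (s : list (X + Y)) : list V :=
  match s with [] => [v] | a :: s' => follow (a :: s') :: trace s' end.

Lemma trace_head s : exists t, trace s = follow s :: t.
Proof. destruct s; simpl; eauto. Qed.

Lemma trace_last s : exists l, trace s = l ++ [v].
Proof.
  induction s as [|a s [l IH]]; [now exists []|].
  exists (follow (a :: s) :: l). simpl. now rewrite IH.
Qed.

Lemma is_walk_trace s : reduced s -> is_walk adj (trace s).
Proof.
  induction s as [|a s IH]; intros H; [exact I|].
  destruct (trace_head s) as [t Ht]. simpl trace. rewrite Ht in IH |- *.
  split; [apply adj_sym, follow_adj, H|]. exact (IH (proj1 H)).
Qed.

Lemma no_backtrack_trace s : reduced s -> no_backtrack (trace s).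
Proof.
  induction s as [|a s IH]; intros H; [exact I|].
  destruct s as [|b s]; [exact I|].
  destruct (trace_head s) as [t Ht].
  change (no_backtrack (follow (a :: b :: s) :: follow (b :: s) :: trace s)).
  specialize (IH (proj1 H)). simpl trace in IH. rewrite Ht in IH |- *.
  split; [|exact IH].
  intros E. pose proof (in_colour_follow _ H) as Ea.
  destruct H as [Hs [_ Hback]]. apply Hback.
  rewrite <- (in_colour_follow s (proj1 Hs)), <- E. now symmetry.
Qed.

Lemma follow_cons_neq_root a s : reduced (a :: s) -> follow (a :: s) <> v.
Proof.
  intros H E. destruct (trace_last s) as [l Hl].
  apply (no_closed_reduced_walk v l).
  - pose proof (is_walk_trace _ H) as W.
    change (trace (a :: s)) with (follow (a :: s) :: trace s) in W. now rewrite E, Hl in W.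
  - pose proof (no_backtrack_trace _ H) as B.
    change (trace (a :: s)) with (follow (a :: s) :: trace s) in B. now rewrite E, Hl in B.
Qed.

(* Otherwise the two geodesics to [follow (a :: s)] would close up into a
   reduced closed walk through [v]. *)
Lemma follow_tail_eq a s t : reduced (a :: s) -> reduced (a :: t) ->
  follow (a :: s) = follow (a :: t) -> follow s = follow t.
Proof.
  intros Hs Ht E. apply NNPP. intros Hne.
  set (u := follow (a :: s)) in *.
  assert (As : adj (follow s) u) by exact (follow_adj _ _ Hs).
  assert (At : adj u (follow t)) by (rewrite E; exact (adj_sym _ _ (follow_adj _ _ Ht))).
  pose proof (is_walk_trace _ (proj1 Hs)) as Ws.
  pose proof (is_walk_trace _ (proj1 Ht)) as Wt.
  pose proof (no_backtrack_trace _ Hs) as Ns.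
  pose proof (no_backtrack_trace _ Ht) as Nt.
  change (trace (a :: s)) with (u :: trace s) in Ns.
  change (trace (a :: t)) with (follow (a :: t) :: trace t) in Nt. rewrite <- E in Nt.
  destruct (trace_head s) as [ps Hps], (trace_head t) as [qs Hqs].
  destruct (trace_last s) as [l1 Hl1], (trace_last t) as [l2 Hl2].
  apply (no_closed_reduced_walk v (rev l1 ++ u :: l2)).
  - replace (v :: (rev l1 ++ u :: l2) ++ [v]) with (rev (trace s) ++ u :: trace t)
      by (rewrite Hl1, Hl2, rev_app_distr; simpl; now rewrite <- app_assoc).
    rewrite Hps, Hqs in *. simpl rev. rewrite <- app_assoc. simpl.
    apply is_walk_app_cons. split.
    + exact (is_walk_rev _ adj _ adj_sym Ws).
    + simpl in Wt |- *. tauto.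
  - replace (v :: (rev l1 ++ u :: l2) ++ [v]) with (rev (trace s) ++ u :: trace t)
      by (rewrite Hl1, Hl2, rev_app_distr; simpl; now rewrite <- app_assoc).
    rewrite Hps, Hqs in *. simpl rev. rewrite <- app_assoc. simpl.
    apply no_backtrack_app_cons2. split.
    + pose proof (no_backtrack_rev _ _ Ns) as R. simpl in R.
      rewrite <- app_assoc in R. exact R.
    + simpl. split; [exact Hne | exact Nt].
Qed.

Lemma follow_inj s t : reduced s -> reduced t -> follow s = follow t -> s = t.
Proof.
  revert t. induction s as [|a s IH]; intros [|b t] Hs Ht E.
  - reflexivity.
  - exfalso. apply (follow_cons_neq_root b t Ht). now symmetry.
  - exfalso. exact (follow_cons_neq_root a s Hs E).
  - assert (a = b).
    { pose proof (in_colour_follow _ Hs) as Ea. pose proof (in_colour_follow _ Ht) as Eb.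
      cbn [hd] in Ea, Eb. now rewrite <- Ea, <- Eb, E. }
    subst b. f_equal. apply IH; [exact (proj1 Hs) | exact (proj1 Ht)|].
    exact (follow_tail_eq a s t Hs Ht E).
Qed.

Lemma neighbour_of_follow s z : reduced s -> adj (follow s) z ->
  (exists a s', s = a :: s' /\ follow s' = z) \/
  (reduced (in_colour z :: s) /\ follow (in_colour z :: s) = z).
Proof.
  intros Hs H.
  assert (Hnext : follow (in_colour z :: s) = z) by exact (next_in_colour _ _ H).
  assert (Hkind : is_inl (in_colour z) <> is_inl (hd (in_colour v) s)).
  { rewrite <- in_colour_follow by exact Hs. now apply is_inl_in_colour_adj_neq. }
  destruct s as [|b s].
  - right. exact (conj (conj Hs (conj Hkind I)) Hnext).
  - destruct (classic (in_colour z = hd (in_colour v) s)) as [Eb|Eb].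
    + left. exists b, s. split; [reflexivity|].
      apply (in_colour_inj (follow (b :: s))); [|exact H|].
      * apply adj_sym, follow_adj, Hs.
      * rewrite Eb. exact (in_colour_follow _ (proj1 Hs)).
    + right. exact (conj (conj Hs (conj Hkind Eb)) Hnext).
Qed.

Lemma follow_surj u : exists s, reduced s /\ follow s = u.
Proof.
  induction (clos_rt_rtn1 _ _ _ _ (tree_connected v u)) as [|y z Hyz _ [s [Hs Es]]].
  - now exists [].
  - subst y. destruct (neighbour_of_follow s z Hs Hyz) as [[a [s' [-> E]]]|[Hr E]].
    + exists s'. split; [exact (proj1 Hs) | exact E].
    + exists (in_colour z :: s). auto.
Qed.

Definition addr (u : V) : list (X + Y) :=
  epsilon (inhabits []) (fun s => reduced s /\ follow s = u).

Lemma addr_spec u : reduced (addr u) /\ follow (addr u) = u.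
Proof. unfold addr. apply epsilon_spec, follow_surj. Qed.

Lemma addr_follow s : reduced s -> addr (follow s) = s.
Proof. intros H. apply follow_inj; [apply addr_spec | exact H | apply addr_spec]. Qed.

Lemma adj_iff_addr u w : adj u w <->
  (exists a, addr w = a :: addr u) \/ (exists a, addr u = a :: addr w).
Proof.
  destruct (addr_spec u) as [Ru Eu], (addr_spec w) as [Rw Ew]. split.
  - intros H. rewrite <- Eu in H.
    destruct (neighbour_of_follow _ w Ru H) as [[a [s' [Ha E]]]|[Hr E]].
    + right. exists a. rewrite Ha, <- E, addr_follow; [reflexivity|].
      rewrite Ha in Ru. exact (proj1 Ru).
    + left. exists (in_colour w). rewrite <- E at 1. now apply addr_follow.
  - intros [[a Ha]|[a Ha]].
    + rewrite <- Eu, <- Ew, Ha. apply follow_adj. now rewrite <- Ha.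
    + apply adj_sym. rewrite <- Eu, <- Ew, Ha. apply follow_adj. now rewrite <- Ha.
Qed.

Lemma reduced_map (f : X + Y -> X + Y) :
  (forall a, is_inl (f a) = is_inl a) -> f (in_colour v) = in_colour v ->
  (forall a b, f a = f b -> a = b) ->
  forall s, reduced s -> reduced (map f s).
Proof.
  intros Hf Hroot Hinj. induction s as [|a s IH]; intros H; [exact I|].
  destruct H as [Hs [Ha Hback]]. split; [|split].
  - exact (IH Hs).
  - rewrite hd_map_fixed, !Hf by exact Hroot. exact Ha.
  - destruct s as [|b s]; [exact I|]. simpl.
    rewrite hd_map_fixed by exact Hroot. intros E. exact (Hback (Hinj _ _ E)).
Qed.

Section Relabel.
Variables sg sg' : X + Y -> X + Y.
Hypothesis sg_is_inl : forall a, is_inl (sg a) = is_inl a.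
Hypothesis sg_root : sg (in_colour v) = in_colour v.
Hypothesis sgK : forall a, sg' (sg a) = a.
Hypothesis sgK' : forall a, sg (sg' a) = a.

Definition relabel (u : V) : V := follow (map sg (addr u)).

Lemma reduced_map_sg s : reduced s -> reduced (map sg s).
Proof.
  apply reduced_map; [exact sg_is_inl | exact sg_root |].
  intros a b E. now rewrite <- (sgK a), <- (sgK b), E.
Qed.

Lemma reduced_map_sg' s : reduced s -> reduced (map sg' s).
Proof.
  apply reduced_map.
  - intros a. now rewrite <- (sg_is_inl (sg' a)), sgK'.
  - now rewrite <- sg_root at 1.
  - intros a b E. now rewrite <- (sgK' a), <- (sgK' b), E.
Qed.

Lemma map_sg'_sg s : map sg' (map sg s) = s.
Proof. rewrite map_map. erewrite map_ext; [apply map_id | exact sgK]. Qed.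

Lemma addr_relabel u : addr (relabel u) = map sg (addr u).
Proof. apply addr_follow, reduced_map_sg, addr_spec. Qed.

Lemma relabel_aut : is_aut adj relabel.
Proof.
  split; [split|].
  - intros u w E. rewrite <- (proj2 (addr_spec u)), <- (proj2 (addr_spec w)).
    now rewrite <- (map_sg'_sg (addr u)), <- (map_sg'_sg (addr w)), <- !addr_relabel, E.
  - intros w. exists (follow (map sg' (addr w))). unfold relabel.
    rewrite addr_follow by apply reduced_map_sg', addr_spec.
    rewrite map_map. erewrite map_ext; [rewrite map_id; apply addr_spec | exact sgK'].
  - intros u w. rewrite !adj_iff_addr, !addr_relabel. split.
    + intros [[a Ha]|[a Ha]]; [left|right]; exists (sg a); now rewrite Ha.
    + intros [[a Ha]|[a Ha]]; [left|right]; exists (sg' a).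
      * rewrite <- (map_sg'_sg (addr w)), Ha. simpl. now rewrite map_sg'_sg.
      * rewrite <- (map_sg'_sg (addr u)), Ha. simpl. now rewrite map_sg'_sg.
Qed.

Lemma relabel_root : relabel v = v.
Proof. unfold relabel. change v with (follow []) at 1. now rewrite addr_follow. Qed.

Lemma in_colour_relabel u : in_colour (relabel u) = sg (in_colour u).
Proof.
  unfold relabel. rewrite in_colour_follow by apply reduced_map_sg, addr_spec.
  rewrite hd_map_fixed by exact sg_root.
  rewrite <- (proj2 (addr_spec u)) at 2. now rewrite in_colour_follow by apply addr_spec.
Qed.

Lemma exists_recolouring_aut : exists g, is_aut adj g /\ g v = v /\
  forall u w, adj u w -> c (g u) (g w) = sg (c u w).
Proof.
  exists relabel. split; [exact relabel_aut | split; [exact relabel_root |]].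
  intros u w H. rewrite !colour_in_colour; [apply in_colour_relabel | exact H |].
  exact (proj1 (proj2 relabel_aut u w) H).
Qed.

End Relabel.

End Root.
Lemma recolouring_preserves_VX (g : V -> V) (sg : X + Y -> X + Y) :
  is_aut adj g -> (forall a, is_inl (sg a) = is_inl a) ->
  (forall u w, adj u w -> c (g u) (g w) = sg (c u w)) ->
  forall u, VX u <-> VX (g u).
Proof.
  intros Hg Hsg Hcol u. destruct (exists_in_neighbour u) as [w Hw].
  apply adj_sym in Hw. pose proof (proj1 (proj2 Hg u w) Hw) as Hgw.
  rewrite <- (is_inl_colour u w Hw), <- (is_inl_colour _ _ Hgw), Hcol, Hsg by exact Hw.
  reflexivity.
Qed.

(* [is_g hatX mu v] and [is_g hatY tau w] unfold to [is_g_mu] and [is_g_tau]. *)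
Definition is_g {Z : Type} (hat : (Z -> Z) -> X + Y -> X + Y) (mu : Z -> Z) (v : V)
  (g : V -> V) : Prop :=
  is_aut adj g /\ (forall u, VX u <-> VX (g u)) /\ g v = v /\
  (forall u w, adj u w -> c u w = hat mu (c (g u) (g w))).

Section LocalAction.
Variables (Z : Type) (G : (Z -> Z) -> Prop) (hat : (Z -> Z) -> X + Y -> X + Y) (v : V).
Hypothesis HG : perm_group G.
Hypothesis hat_id : forall a, hat (fun z => z) a = a.
Hypothesis hat_comp : forall f f' a, hat (fun z => f (f' z)) a = hat f (hat f' a).
Hypothesis hat_is_inl : forall mu a, is_inl (hat mu a) = is_inl a.
Hypothesis hat_root : forall mu, hat mu (in_colour v) = in_colour v.
Hypothesis hat_faithful : forall mu mu',
  (forall u, adj v u -> hat mu (c v u) = hat mu' (c v u)) -> mu = mu'.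

Lemma hat_cancel mu mu' a : (forall z, mu' (mu z) = z) -> hat mu' (hat mu a) = a.
Proof.
  intros H. rewrite <- hat_comp.
  replace (fun z => mu' (mu z)) with (fun z : Z => z) by (extensionality z; now rewrite H).
  apply hat_id.
Qed.

Lemma G_inverse f : G f -> exists h, G h /\ forall z, h (f z) = z /\ f (h z) = z.
Proof. destruct HG as [_ [_ [_ H]]]. apply H. Qed.

Lemma is_g_id : is_g hat (fun z => z) v (fun u => u).
Proof.
  split; [|split; [|split]].
  - split; [split|]; [auto | intros b; now exists b | tauto].
  - tauto.
  - reflexivity.
  - intros u w _. now rewrite hat_id.
Qed.

Lemma is_g_comp mu1 mu2 g1 g2 : is_g hat mu1 v g1 -> is_g hat mu2 v g2 ->
  is_g hat (fun z => mu2 (mu1 z)) v (fun u => g1 (g2 u)).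
Proof.
  intros [A1 [C1 [F1 H1]]] [A2 [C2 [F2 H2]]]. split; [|split; [|split]].
  - now apply is_aut_comp.
  - intros u. rewrite C2, C1. tauto.
  - now rewrite F2.
  - intros u w H. rewrite hat_comp, (H2 u w H). f_equal.
    apply H1, (proj2 A2 u w), H.
Qed.

Lemma is_g_colour mu mu' g : is_g hat mu v g -> (forall z, mu' (mu z) = z) ->
  forall u w, adj u w -> c (g u) (g w) = hat mu' (c u w).
Proof. intros [_ [_ [_ Hg]]] Hm u w H. rewrite (Hg u w H). symmetry. now apply hat_cancel. Qed.

Lemma is_g_inv mu mu' g h : is_g hat mu v g -> (forall z, mu' (mu z) = z) ->
  (forall u, h (g u) = u /\ g (h u) = u) -> is_g hat mu' v h.
Proof.
  intros Hg Hm Hh. pose proof Hg as [A [C [F _]]]. split; [|split; [|split]].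
  - exact (is_aut_inverse _ adj g h A Hh).
  - intros u. rewrite (C (h u)), (proj2 (Hh u)). tauto.
  - rewrite <- F at 1. apply Hh.
  - intros u w H.
    assert (H' : adj (h u) (h w)).
    { apply (proj2 A). now rewrite (proj2 (Hh u)), (proj2 (Hh w)). }
    rewrite <- (proj2 (Hh u)) at 1. rewrite <- (proj2 (Hh w)) at 1.
    exact (is_g_colour mu mu' g Hg Hm _ _ H').
Qed.

(* By connectedness, an automorphism fixing [v] is determined by how it recolours arcs. *)
Lemma is_g_unique mu g g' : G mu -> is_g hat mu v g -> is_g hat mu v g' -> g = g'.
Proof.
  intros Gm Hg Hg'. destruct (G_inverse mu Gm) as [mu' [_ Hm]].
  pose proof Hg as [A [_ [F _]]]. pose proof Hg' as [A' [_ [F' _]]].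
  extensionality u.
  induction (clos_rt_rtn1 _ _ _ _ (tree_connected v u)) as [|y z Hyz _ IH];
    [congruence|].
  apply (colour_inj (g y)); [exact (proj1 (proj2 A y z) Hyz) | |].
  - rewrite IH. exact (proj1 (proj2 A' y z) Hyz).
  - rewrite IH at 2. rewrite (is_g_colour mu mu' g Hg), (is_g_colour mu mu' g' Hg');
      [reflexivity | apply Hm | exact Hyz | apply Hm | exact Hyz].
Qed.

Lemma is_g_faithful mu mu' g : is_g hat mu v g -> is_g hat mu' v g -> mu = mu'.
Proof.
  intros [A [_ [F H]]] [_ [_ [_ H']]]. apply hat_faithful.
  intros w Hw. destruct (proj2 (proj1 A) w) as [w0 E].
  assert (Hw0 : adj v w0) by (apply (proj2 A); now rewrite F, E).
  rewrite <- E, <- F, <- (H _ _ Hw0). apply H', Hw0.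
Qed.

Lemma exists_is_g mu : G mu -> exists g, is_g hat mu v g.
Proof.
  intros Gm. destruct (G_inverse mu Gm) as [f [_ Hf]].
  destruct (exists_recolouring_aut v (hat f) (hat mu)) as [g [A [F Hcol]]];
    try apply hat_is_inl; try apply hat_root; try (intros a; apply hat_cancel, Hf).
  exists g. split; [exact A | split; [| split; [exact F |]]].
  - exact (recolouring_preserves_VX g (hat f) A (hat_is_inl f) Hcol).
  - intros u w H. rewrite (Hcol u w H). symmetry. apply hat_cancel, Hf.
Qed.

Definition hat_group (g : V -> V) : Prop := exists mu, G mu /\ is_g hat mu v g.

Lemma hat_group_is_subgroup (K : (V -> V) -> Prop) :
  (forall g, hat_group g -> K g) -> is_subgroup hat_group K.
Proof.
  intros HK. destruct HG as [_ [Gid [Gcomp _]]].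
  split; [exact HK | split; [| split]].
  - exists (fun z => z). split; [exact Gid | exact is_g_id].
  - intros g1 g2 [mu1 [G1 H1]] [mu2 [G2 H2]]. exists (fun z => mu2 (mu1 z)).
    split; [now apply Gcomp | now apply is_g_comp].
  - intros g [mu [Gm Hg]]. destruct (G_inverse mu Gm) as [mu' [Gm' Hm]].
    destruct (bijective_fun_inverse _ g (proj1 (proj1 Hg))) as [h Hh].
    exists h. split; [|exact Hh]. exists mu'. split; [exact Gm'|].
    apply (is_g_inv mu mu' g h Hg); [apply Hm | exact Hh].
Qed.

Definition group_inv (f : Z -> Z) : Z -> Z :=
  epsilon (inhabits f) (fun h => G h /\ forall z, h (f z) = z /\ f (h z) = z).

Lemma group_inv_spec f : G f -> G (group_inv f) /\
  forall z, group_inv f (f z) = z /\ f (group_inv f z) = z.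
Proof. intros Gf. unfold group_inv. apply epsilon_spec, G_inverse, Gf. Qed.

Lemma group_inv_unique f h : (forall z, h (f z) = z /\ f (h z) = z) -> G f ->
  group_inv f = h.
Proof.
  intros Hh Gf. destruct (group_inv_spec f Gf) as [_ Hi]. extensionality z.
  rewrite <- (proj2 (Hh z)) at 1. apply Hi.
Qed.

Definition g_of (mu : Z -> Z) : V -> V :=
  epsilon (inhabits (fun u => u)) (fun g => is_g hat mu v g).

Lemma g_of_spec mu : G mu -> is_g hat mu v (g_of mu).
Proof. intros Gm. unfold g_of. apply epsilon_spec, exists_is_g, Gm. Qed.

(* [mu |-> g_of mu] reverses products, so the isomorphism is [f |-> g_of f^-1]. *)
Lemma hat_group_iso : groups_isomorphic G hat_group.
Proof.
  destruct HG as [_ [_ [Gcomp _]]].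
  assert (Ginv : forall f, G f -> G (group_inv f)) by (intros f Gf; apply group_inv_spec, Gf).
  exists (fun f => g_of (group_inv f)). split; [| split; [| split]].
  - intros f Gf. exists (group_inv f). split; [now apply Ginv | now apply g_of_spec, Ginv].
  - intros f f' Gf Gf' E.
    assert (Ei : group_inv f = group_inv f').
    { apply (is_g_faithful _ _ (g_of (group_inv f))); [now apply g_of_spec, Ginv|].
      rewrite E. now apply g_of_spec, Ginv. }
    extensionality z. destruct (group_inv_spec f Gf) as [_ Hf].
    destruct (group_inv_spec f' Gf') as [_ Hf'].
    rewrite <- (proj1 (Hf' z)) at 1. rewrite <- Ei. apply Hf.
  - intros g [mu [Gm Hg]]. destruct (group_inv_spec mu Gm) as [Gf Hf].
    exists (group_inv mu). split; [exact Gf|].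
    rewrite (group_inv_unique (group_inv mu) mu); [| intros z; split; apply Hf | exact Gf].
    apply (is_g_unique mu); [exact Gm | now apply g_of_spec | exact Hg].
  - intros f f' Gf Gf'.
    destruct (group_inv_spec f Gf) as [Gi Hf], (group_inv_spec f' Gf') as [Gi' Hf'].
    rewrite (group_inv_unique (fun z => f (f' z)) (fun z => group_inv f' (group_inv f z)));
      [| intros z; rewrite (proj1 (Hf _)), (proj2 (Hf' _)); split; [apply Hf' | apply Hf]
       | now apply Gcomp].
    apply (is_g_unique (fun z => group_inv f' (group_inv f z))); [now apply Gcomp | |].
    + now apply g_of_spec, Gcomp.
    + apply is_g_comp; now apply g_of_spec.
Qed.

End LocalAction.
Lemma hatX_in_colour v mu : VX v -> hatX mu (in_colour v) = in_colour v.
Proof.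
  intros Hv. assert (Hk : is_inl (in_colour v) <> true).
  { rewrite is_inl_in_colour. intros Hw. exact (not_VX_VY v (conj Hv Hw)). }
  destruct (in_colour v); [now destruct Hk | reflexivity].
Qed.

Lemma hatY_in_colour w tau : VY w -> hatY tau (in_colour w) = in_colour w.
Proof.
  intros Hw. apply is_inl_in_colour in Hw.
  destruct (in_colour w); [reflexivity | discriminate].
Qed.

Lemma hatX_faithful v : VX v -> forall mu mu' : X -> X,
  (forall u, adj v u -> hatX mu (c v u) = hatX mu' (c v u)) -> mu = mu'.
Proof.
  intros Hv mu mu' H. extensionality x. destruct Hc as [HX _].
  destruct (proj2 (HX v Hv) x) as [u [[Hu Hcu] _]].
  specialize (H u Hu). rewrite Hcu in H. now injection H.
Qed.

Lemma hatY_faithful w : VY w -> forall tau tau' : Y -> Y,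
  (forall u, adj w u -> hatY tau (c w u) = hatY tau' (c w u)) -> tau = tau'.
Proof.
  intros Hw tau tau' H. extensionality y. destruct Hc as [_ [HY _]].
  destruct (proj2 (HY w Hw) y) as [u [[Hu Hcu] _]].
  specialize (H u Hu). rewrite Hcu in H. now injection H.
Qed.

Section Stabilisers.
Variables (M : (X -> X) -> Prop) (N : (Y -> Y) -> Prop).
Hypotheses (HM : perm_group M) (HN : perm_group N).

Lemma Mhat_iso v : VX v -> groups_isomorphic M (Mhat adj VX c M v).
Proof.
  intros Hv. apply (hat_group_iso X M (@hatX X Y) v HM hatX_id hatX_comp is_inl_hatX).
  - intros mu. now apply hatX_in_colour.
  - now apply hatX_faithful.
Qed.

Lemma Nhat_iso w : VY w -> groups_isomorphic N (Nhat adj VX c N w).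
Proof.
  intros Hw. apply (hat_group_iso Y N (@hatY X Y) w HN hatY_id hatY_comp is_inl_hatY).
  - intros tau. now apply hatY_in_colour.
  - now apply hatY_faithful.
Qed.

Lemma Mhat_subgroup v : is_subgroup (Mhat adj VX c M v) (Uc_stab adj VX VY c M N v).
Proof.
  apply (hat_group_is_subgroup X M (@hatX X Y) v HM hatX_id hatX_comp).
  intros g [mu [Gm Hg]]. pose proof Hg as [A [C [F _]]].
  destruct HM as [_ [_ [_ Minv]]]. destruct (Minv mu Gm) as [mu' [Gm' Hm]].
  assert (Hcol := is_g_colour X (@hatX X Y) v hatX_id hatX_comp mu mu' g Hg (fun x => proj1 (Hm x))).
  split; [| exact F]. split; [exact A | split; [exact C | split]].
  - intros u _. exists mu'. split; [exact Gm' | exact (Hcol u)].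
  - intros u Hu. exists (fun y => y). split; [apply HN |].
    intros u' Hu'. destruct (VY_colour_inr u u' Hu Hu') as [y Hy].
    now rewrite (Hcol u u' Hu'), Hy.
Qed.

Lemma Nhat_subgroup w : is_subgroup (Nhat adj VX c N w) (Uc_stab adj VX VY c M N w).
Proof.
  apply (hat_group_is_subgroup Y N (@hatY X Y) w HN hatY_id hatY_comp).
  intros g [tau [Gt Hg]]. pose proof Hg as [A [C [F _]]].
  destruct HN as [_ [_ [_ Ninv]]]. destruct (Ninv tau Gt) as [tau' [Gt' Ht]].
  assert (Hcol := is_g_colour Y (@hatY X Y) w hatY_id hatY_comp tau tau' g Hg (fun y => proj1 (Ht y))).
  split; [| exact F]. split; [exact A | split; [exact C | split]].
  - intros u Hu. exists (fun x => x). split; [apply HM |].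
    intros u' Hu'. destruct (VX_colour_inl u u' Hu Hu') as [x Hx].
    now rewrite (Hcol u u' Hu'), Hx.
  - intros u _. exists tau'. split; [exact Gt' | exact (Hcol u)].
Qed.

End Stabilisers.

End BiregularTree.

Theorem proposition3p9 (X Y V : Type) (adj : V -> V -> Prop) (VX VY : V -> Prop)
  (M : (X -> X) -> Prop) (N : (Y -> Y) -> Prop) (c : V -> V -> X + Y) :
  card_ge2 X -> card_ge2 Y ->
  perm_group M -> perm_group N ->
  nontrivial_group M -> nontrivial_group N ->
  biregular_tree X Y adj VX VY ->
  legal_colouring adj VX VY c ->
  forall v w, VX v -> VY w ->
    is_subgroup (Mhat adj VX c M v) (Uc_stab adj VX VY c M N v) /\
    is_subgroup (Nhat adj VX c N w) (Uc_stab adj VX VY c M N w) /\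
    groups_isomorphic M (Mhat adj VX c M v) /\
    groups_isomorphic N (Nhat adj VX c N w).
Proof.
  intros [x0 _] [y0 _] HM HN _ _ Htree Hc v w Hv Hw.
  split; [| split; [| split]].
  - exact (Mhat_subgroup X Y V adj VX VY c Hc M N HM HN v).
  - exact (Nhat_subgroup X Y V adj VX VY c Hc M N HM HN w).
  - exact (Mhat_iso X Y V adj VX VY c Htree Hc x0 y0 M HM v Hv).
  - exact (Nhat_iso X Y V adj VX VY c Htree Hc x0 y0 N HN w Hw).
Qed.
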